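(* Let $M(\mathbb{1},\lambda,e,V)$ be the generic characteristic matrix of a $\mathbb{Z}^d$-periodic graph specialized at $z=\mathbb{1}=(1,\dots,1)$. Then $\det M(\mathbb{1},\lambda,e,V)$ is cancellation-free.
   Context: A $\mathbb{Z}^d$-periodic graph $\Gamma$ is a simple undirected graph of bounded degree with a free $\mathbb{Z}^d$-action by automorphisms with finitely many vertex and edge orbits; $W$ is a set of vertex-orbit representatives, identified with $[n]$. The generic characteristic matrix is $M(z,\lambda,e,V)=\lambda I_n-H(z,e,V)$, where $H(z,e,V)$ has $(v,u)$ entry $\delta_{v,u}V(v)-\sum_{\alpha\in\mathbb{Z}^d: v\sim\alpha+u}e_{(v,\alpha+u)}z^\alpha$ with independent indeterminates $e$ (one per edge orbit) and $V(v)$ (one per $v\in W$). For an $n\times n$ polynomial matrix $M=(f_{i,j})$, $\det M=\sum_{w\in S_n}\mathrm{sgn}(w)M_w$ with $M_w=\prod_i f_{i,w(i)}$, and $\det M$ is cancellation-free if for every $w$ with $M_w\neq0$ the support (set of monomials, here in $\lambda,e,V$) of $M_w$ is contained in the support of $\det M$. *)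

From HB Require Import structures.
From mathcomp Require Import all_boot all_order all_algebra all_fingroup.
From mathcomp Require Import mpoly.
Set Implicit Arguments. Unset Strict Implicit. Unset Printing Implicit Defensive.
Import GRing.Theory.
Local Open Scope ring_scope.

(* A Z^d-periodic graph with n vertex orbits and m edge orbits.
   Vertices are pairs (w, x) with w : 'I_n (the orbit representative set W = [n])
   and x : Z^d (row vector 'rV[int]_d); Z^d acts freely by translation of x.
   The m edge orbits are given by representatives E k = (u, v, beta), meaning
   the edge {(u,0), (v,beta)}; the whole orbit is {(u,x),(v,x+beta)}, x in Z^d. *)
Definition edge_rep n d := ('I_n * 'I_n * 'rV[int]_d)%type.

Definition rev_edge n d (t : edge_rep n d) : edge_rep n d :=
  (t.1.2, t.1.1, - t.2).

(* Well-formedness: distinct k give distinct edge orbits, and no loops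
   (the graph is simple). Bounded degree follows from finitely many orbits. *)
Definition periodic_graph_data n d m (E : 'I_m -> edge_rep n d) : Prop :=
  [/\ injective E,
      (forall k, ~ ((E k).1.1 = (E k).1.2 /\ (E k).2 = 0)) &
      (forall k l, E l <> rev_edge (E k))].

Definition padj n d m (E : 'I_m -> edge_rep n d)
  (p q : 'I_n * 'rV[int]_d) : Prop :=
  exists k : 'I_m, (E k = (p.1, q.1, q.2 - p.2)) \/ (E k = (q.1, p.1, p.2 - q.2)).

Definition nvars m n := (m + n).+1.
Definition lam_var m n : {mpoly int[nvars m n]} := 'X_ord0.
Definition e_var m n (k : 'I_m) : {mpoly int[nvars m n]} := 'X_(inord k.+1).
Definition V_var m n (v : 'I_n) : {mpoly int[nvars m n]} := 'X_(inord (m + v).+1).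

(* H(1, e, V)_{v,u} = delta_{v,u} V(v) - sum_{alpha : v ~ alpha + u} e_{(v, alpha+u)}.
   The neighbours (u, alpha) of (v, 0) in edge orbit k are: alpha = beta if
   E k = (v,u,beta), and alpha = -beta if E k = (u,v,beta); when u = v both occur
   (and are distinct since beta <> 0). *)
Definition H1 n d m (E : 'I_m -> edge_rep n d) : 'M[{mpoly int[nvars m n]}]_n :=
  \matrix_(v, u)
    ((v == u)%:R * V_var m v
     - \sum_(k < m) e_var n k *
         ((((E k).1.1 == v) && ((E k).1.2 == u))%:R
          + (((E k).1.1 == u) && ((E k).1.2 == v))%:R)).

Definition charM1 n d m (E : 'I_m -> edge_rep n d) : 'M[{mpoly int[nvars m n]}]_n :=
  lam_var m n *: 1%:M - H1 E.

Definition perm_term k N (A : 'M[{mpoly int[k]}]_N) (w : 'S_N) : {mpoly int[k]} :=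
  \prod_(i < N) A i (w i).

Definition cancellation_free k N (A : 'M[{mpoly int[k]}]_N) : Prop :=
  forall w : 'S_N, perm_term A w != 0 ->
    {subset msupp (perm_term A w) <= msupp (\det A)}.

From mathcomp Require Import all_boot all_order all_algebra all_fingroup.
From mathcomp Require Import mpoly.
Set Implicit Arguments. Unset Strict Implicit. Unset Printing Implicit Defensive.
Import Order.TTheory GRing.Theory Num.Theory.
Local Open Scope ring_scope.

(* Every entry of M(1) is a linear form in the variables, so the coefficient of
   a monomial mu in det M(1) is a sum, over permutations w and choices of one
   variable in each entry M_{i,w(i)}, of signed products of entry coefficients.
   The monomial mu determines the rows in which -V(i) was chosen, the only
   negative coefficients, hence the sign of the product.  It also determines,
   for all j <> u, the number [w j = u] + [w u = j]: this is the degree of mu in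
   the edge variables of the orbits joining j and u.  These numbers fix w up to
   reversing some of its cycles, hence fix the sign of w.  So all contributions
   to the coefficient of mu have the same sign and none of them cancel. *)

Definition perm_link (T : finType) (s : {perm T}) (x y : T) : nat :=
  ((s x == y) + (s y == x))%N.

Lemma perm_link_sum (T : finType) (s : {perm T}) x y :
  perm_link s x y = (\sum_i (((i == x) && (s i == y)) + ((i == y) && (s i == x))))%N.
Proof.
rewrite big_split /= (bigD1 x) //= eqxx big1 ?addn0 => [|i /negbTE-> //].
by rewrite (bigD1 y) //= eqxx big1 ?addn0 => [|i /negbTE-> //].
Qed.

Section PermLinks.
Variables (T : finType) (s s' : {perm T}).
Hypothesis links_eq : forall x y, x != y -> perm_link s x y = perm_link s' x y.

Lemma perm_fix_links x : (s x == x) = (s' x == x).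
Proof.
have fix_imp (a b : {perm T}) :
    (forall y, y != x -> perm_link a x y = perm_link b x y) ->
    a x == x -> b x == x.
  move=> ab /eqP ax; apply/negPn/negP => bx.
  have abx : (a (b x) == x) = false by rewrite -{2}ax (inj_eq perm_inj) (negbTE bx).
  by have := ab _ bx; rewrite /perm_link ax abx eq_sym (negbTE bx) eqxx.
by apply/idP/idP; apply: fix_imp => y yx; rewrite links_eq // eq_sym.
Qed.

Lemma perm_disagree_inv x : s' x != s x -> s (s' x) = x.
Proof.
move=> ne; have s'x : s' x != x.
  apply: contra ne => fx; have sx := fx; rewrite -perm_fix_links in sx.
  by rewrite (eqP fx) (eqP sx).
have := links_eq s'x; rewrite /perm_link [s x == _]eq_sym (negbTE ne) eqxx /=.
by case: eqP => // _; case: (s' (s' x) == x).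
Qed.

Lemma perm_disagree_stable x : s' x != s x -> s' (s x) != s (s x).
Proof.
move=> ne; apply/negP => /eqP e.
have sx : s x != x.
  apply: contra ne => fx; have s'x := fx; rewrite perm_fix_links in s'x.
  by rewrite (eqP fx) (eqP s'x).
have := links_eq sx; rewrite /perm_link eqxx (negbTE ne) e.
by move/addnI.
Qed.

Lemma odd_perm_links : odd_perm s = odd_perm s'.
Proof.
have rho_inj : injective (fun x => if s' x != s x then s x else x).
  move=> x y; case: (boolP (s' x != s x)) => Dx; case: (boolP (s' y != s y)) => Dy //.
  - exact: perm_inj.
  - by move=> sxy; case/negP: Dy; rewrite -sxy perm_disagree_stable.
  - by move=> xsy; case/negP: Dx; rewrite xsy perm_disagree_stable.
(* s' is the inverse of s on the s-stable set where they differ, so s = rho^2 s'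
   where rho is s on that set and the identity elsewhere. *)
pose rho := perm rho_inj.
suff -> : s = (rho * rho * s')%g by rewrite !odd_permM addbb.
apply/permP => x; rewrite !permM !permE; cbv beta.
have [Dx|Ex] := boolP (s' x != s x); last by rewrite (negbTE Ex); move/negPn/eqP: Ex.
have Dsx := perm_disagree_stable Dx; rewrite Dsx.
by apply: (@perm_inj _ s); rewrite (perm_disagree_inv (perm_disagree_stable Dsx)).
Qed.

End PermLinks.

Lemma big_option (R : Type) (idx : R) (op : Monoid.com_law idx) (T : finType)
    (F : option T -> R) :
  \big[op/idx]_(t : option T) F t = op (F None) (\big[op/idx]_(x : T) F (Some x)).
Proof.
rewrite (bigD1 None) //=; congr (op _ _).
rewrite (@reindex_omap _ _ _ _ _ Some id) => [|[x|] //].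
by apply: eq_bigl => x; rewrite eqxx.
Qed.

Lemma pair_count (T : eqType) (x y j u : T) : j != u ->
  ((x == j) && (y == u) || (x == u) && (y == j) : nat) =
  ((x == j) && (y == u) + (x == u) && (y == j))%N.
Proof.
move=> ju; case: (x =P j) => [->|_] //=.
by rewrite (negbTE ju) orbF addn0.
Qed.

Section LinearForms.
Variables (R : comNzRingType) (k : nat).

Lemma prod_linear_forms (I T : finType) (a : I -> T -> R) (x : I -> T -> 'I_k) :
  \prod_i \sum_t a i t *: 'X_(x i t) =
  \sum_(f : {ffun I -> T}) (\prod_i a i (f i)) *: 'X_[\sum_i U_(x i (f i))]
    :> {mpoly R[k]}.
Proof.
rewrite bigA_distr_bigA; apply: eq_bigr => f _.
under eq_bigr do rewrite -mul_mpolyC.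
rewrite big_split /= -rmorph_prod mul_mpolyC; congr (_ *: _).
by rewrite (big_morph _ (@mpolyXD _ _) (@mpolyX0 _ _)).
Qed.

Lemma mcoeff_sumZX (J : finType) (F : J -> R) (mono : J -> 'X_{1..k}) mm :
  (\sum_j F j *: 'X_[mono j])@_mm = \sum_(j | mono j == mm) F j.
Proof.
rewrite raddf_sum [RHS]big_mkcond; apply: eq_bigr => j _.
by rewrite /= mcoeffZ mcoeffX; case: eqP; rewrite ?mulr1 ?mulr0.
Qed.

Lemma mcoeff_det N (A : 'M[{mpoly R[k]}]_N) mm :
  (\det A)@_mm = \sum_(s : 'S_N) (-1) ^+ s * (\prod_i A i (s i))@_mm.
Proof.
rewrite raddf_sum; apply: eq_bigr => s _.
by rewrite /= !mulr_sign; case: (odd_perm s); rewrite ?mcoeffN.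
Qed.

End LinearForms.

Lemma sumr_neq0_same_sign (R : numDomainType) (I : finType) (P : pred I)
    (F : I -> R) i0 :
  P i0 -> F i0 != 0 -> (forall i, P i -> 0 <= F i0 * F i) ->
  \sum_(i | P i) F i != 0.
Proof.
move=> Pi0 Fi0 same_sign.
have pos : 0 < F i0 * \sum_(i | P i) F i.
  rewrite mulr_sumr (bigD1 i0) //=; apply: ltr_pwDl.
    by rewrite lt0r mulf_neq0 ?same_sign.
  by apply: sumr_ge0 => i /andP[/same_sign].
by apply: contraTneq pos => ->; rewrite mulr0 ltxx.
Qed.

Section CharacteristicMatrix.
Variables (n d m : nat) (E : 'I_m -> edge_rep n d).

(* A term of the entry (v, u) selects one of its variables: [None] is lambda,
   [Some None] is V(v) and [Some (Some k)] is e_k. *)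
Local Notation term := (option (option 'I_m)).

Definition e_index (k : 'I_m) : 'I_(nvars m n) := lift ord0 (lshift n k).
Definition V_index (v : 'I_n) : 'I_(nvars m n) := lift ord0 (rshift m v).

Definition term_var (v : 'I_n) (t : term) : 'I_(nvars m n) :=
  match t with
  | None => ord0
  | Some None => V_index v
  | Some (Some k) => e_index k
  end.

Definition incident (k : 'I_m) (v u : 'I_n) : bool :=
  ((E k).1.1 == v) && ((E k).1.2 == u).
Definition joins (k : 'I_m) (v u : 'I_n) : bool := incident k v u || incident k u v.

Definition term_coef (v u : 'I_n) (t : term) : int :=
  match t with
  | None => (v == u)%:R
  | Some None => - (v == u)%:R
  | Some (Some k) => (incident k v u)%:R + (incident k u v)%:R
  end.

Lemma charM1E v u :
  charM1 E v u = \sum_t term_coef v u t *: 'X_(term_var v t).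
Proof.
have e_indexE (k : 'I_m) : inord k.+1 = e_index k.
  by apply: val_inj; rewrite /= inordK // ltnS ltn_addr.
have V_indexE : inord (m + v).+1 = V_index v.
  by apply: val_inj; rewrite /= inordK // ltnS ltn_add2l.
have sumE : \sum_(k < m) e_var n k * ((incident k v u)%:R + (incident k u v)%:R) =
    \sum_(k < m) ((incident k v u)%:R + (incident k u v)%:R) *: 'X_(e_index k).
  apply: eq_bigr => k _.
  by rewrite /e_var e_indexE scalerDl !scaler_nat mulrDr !mulr_natr.
rewrite !big_option !mxE /= -/(incident _ _ _) sumE /V_var V_indexE /lam_var.
rewrite scaleNr !scaler_nat mulr_natr mulr_natl opprB.
by congr (_ + _); rewrite addrC.
Qed.

Definition term_mono (f : {ffun 'I_n -> term}) : 'X_{1..nvars m n} :=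
  (\sum_i U_(term_var i (f i)))%MM.
Definition term_weight (w : 'S_n) (f : {ffun 'I_n -> term}) : int :=
  \prod_i term_coef i (w i) (f i).

Lemma mcoeff_perm_term w mm :
  (perm_term (charM1 E) w)@_mm = \sum_(f | term_mono f == mm) term_weight w f.
Proof.
rewrite /perm_term; under eq_bigr do rewrite charM1E.
by rewrite prod_linear_forms mcoeff_sumZX.
Qed.

Lemma mcoeff_det_charM1 mm :
  (\det (charM1 E))@_mm =
  \sum_(p : 'S_n * _ | term_mono p.2 == mm) (-1) ^+ p.1 * term_weight p.1 p.2.
Proof.
rewrite mcoeff_det; under eq_bigr do rewrite mcoeff_perm_term mulr_sumr.
by rewrite pair_big_dep.
Qed.

Lemma term_var_eqV i t j : (term_var i t == V_index j) = (t == Some None) && (i == j).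
Proof.
case: t => [[k|]|] /=; rewrite ?(inj_eq lift_inj).
- by rewrite eq_lrshift.
- by rewrite eq_rshift.
- by rewrite (negbTE (neq_lift _ _)).
Qed.

Lemma term_var_eqe i t k : (term_var i t == e_index k) = (t == Some (Some k)).
Proof.
case: t => [[k'|]|] /=; rewrite ?(inj_eq lift_inj).
- by rewrite eq_lshift.
- by rewrite eq_rlshift.
- by rewrite (negbTE (neq_lift _ _)).
Qed.

Lemma term_mono_V f j : term_mono f (V_index j) = (f j == Some None).
Proof.
rewrite mnm_sumE (bigD1 j) //= big1 ?addn0 => [|i ij].
  by rewrite mnm1E term_var_eqV eqxx andbT.
by rewrite mnm1E term_var_eqV (negbTE ij) andbF.
Qed.

Lemma term_mono_e f k :
  term_mono f (e_index k) = (\sum_i (f i == Some (Some k)))%N.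
Proof. by rewrite mnm_sumE; apply: eq_bigr => i _; rewrite mnm1E term_var_eqe. Qed.

Definition term_sign (f : {ffun 'I_n -> term}) : int :=
  \prod_i (-1) ^+ (f i == Some None).

Lemma term_signE f : term_sign f = \prod_i (-1) ^+ term_mono f (V_index i).
Proof. by apply: eq_bigr => i _; rewrite term_mono_V. Qed.

Lemma term_sign_sqr f : term_sign f * term_sign f = 1.
Proof. by rewrite -big_split big1 // => i _ /=; rewrite -expr2 sqrr_sign. Qed.

Lemma term_sign_weight_ge0 w f : 0 <= term_sign f * term_weight w f.
Proof.
rewrite -big_split /=; apply: prodr_ge0 => i _.
case: (f i) => [[k|]|] /=; rewrite ?expr0 ?expr1 ?mul1r ?mulN1r ?opprK //.
by rewrite addr_ge0 ?ler0n.
Qed.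

Lemma joins_count k i u' j u : joins k i u' -> j != u ->
  (joins k j u : nat) = ((i == j) && (u' == u) + (i == u) && (u' == j))%N.
Proof.
rewrite /joins /incident => + ju; move: (E k).1.1 (E k).1.2 => a b.
case/orP => /andP[/eqP<- /eqP<-]; rewrite pair_count //.
by rewrite addnC andbC [(b == u) && _]andbC.
Qed.

Lemma term_coef_neq0 i u' t : term_coef i u' t != 0 ->
  if t is Some (Some k) then joins k i u' else i == u'.
Proof.
case: t => [[k|]|] /=; try by apply: contraNT => /negbTE->.
by rewrite /joins; case: (incident k i u'); case: (incident k u' i).
Qed.

Lemma row_edge_count i u' t j u : term_coef i u' t != 0 -> j != u ->
  (\sum_(k | joins k j u) (t == Some (Some k)))%N =
  ((i == j) && (u' == u) + (i == u) && (u' == j))%N.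
Proof.
move=> /term_coef_neq0 + ju.
have no_loop : ((i == j) && (i == u) + (i == u) && (i == j))%N = 0%N.
  by case: (i =P j) => [->|_]; rewrite ?(negbTE ju) ?andbF.
case: t => [[k0|]|] => [join0|/eqP<-|/eqP<-]; try by rewrite no_loop big1.
rewrite big_mkcond (bigD1 k0) //= eqxx big1 ?addn0 => [|k /negbTE kk0].
  by rewrite -(joins_count join0 ju); case: (joins k0 j u).
by rewrite !(inj_eq Some_inj) eq_sym kk0; case: (joins k j u).
Qed.

Definition edge_degree (mm : 'X_{1..nvars m n}) (j u : 'I_n) : nat :=
  \sum_(k < m | joins k j u) mm (e_index k).

Lemma edge_degree_term_mono w f j u : term_weight w f != 0 -> j != u ->
  edge_degree (term_mono f) j u = perm_link w j u.
Proof.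
move=> /prodf_neq0 nz ju; rewrite perm_link_sum /edge_degree.
rewrite (eq_bigr _ (fun k _ => term_mono_e f k)).
rewrite exchange_big; apply: eq_bigr => i _.
exact: row_edge_count (nz i isT) ju.
Qed.

Lemma odd_perm_term_mono w w' f f' :
  term_weight w f != 0 -> term_weight w' f' != 0 -> term_mono f = term_mono f' ->
  odd_perm w = odd_perm w'.
Proof.
move=> nz nz' mono; apply: odd_perm_links => j u ju.
by rewrite -(edge_degree_term_mono nz ju) -(edge_degree_term_mono nz' ju) mono.
Qed.

Lemma contribution_sign_ge0 (w w' : 'S_n) f f' :
  term_weight w f != 0 -> term_mono f = term_mono f' ->
  0 <= ((-1) ^+ w * term_weight w f) * ((-1) ^+ w' * term_weight w' f').
Proof.
have [->|nz'] := eqVneq (term_weight w' f') 0; first by rewrite !mulr0.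
move=> nz mono; have sign_eq : term_sign f = term_sign f' by rewrite !term_signE mono.
rewrite (odd_perm_term_mono nz nz' mono) mulrACA -expr2 sqrr_sign mul1r.
rewrite -[X in 0 <= X]mul1r -(term_sign_sqr f) mulrACA {2}sign_eq.
by apply: mulr_ge0; apply: term_sign_weight_ge0.
Qed.

End CharacteristicMatrix.

Theorem corollary2p4 (n d m : nat) (E : 'I_m -> edge_rep n d) :
  periodic_graph_data E -> cancellation_free (charM1 E).
Proof.
move=> _ w0 _ mm; rewrite !mcoeff_msupp mcoeff_perm_term mcoeff_det_charM1 => nz.
have [f0 /andP[/eqP mono0 weight0]] :
    exists f, (term_mono f == mm) && (term_weight E w0 f != 0).
  apply/existsP; apply: contraR nz => /existsPn none; rewrite big1 // => f mono.
  by have := none f; rewrite mono negbK => /eqP.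
apply: (@sumr_neq0_same_sign _ _ _ _ (w0, f0)) => /=.
- by rewrite mono0.
- by rewrite mulf_neq0 ?signr_eq0.
- by move=> [w f] /= /eqP mono; apply: contribution_sign_ge0; rewrite ?mono.
Qed.
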